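(* Let $I \subset S=K[x_1,\ldots,x_n]$ be a monomial ideal ($K$ a field). Then the following are equivalent: (1) $I$ is componentwise polymatroidal. (2) For all monomials $u,v \in I$ with $\deg(u)\leq \deg(v)$ and $u \nmid v$, and for every $i$ with $\deg_{x_i}(v) > \deg_{x_i}(u)$, there exists $j$ with $\deg_{x_j}(v)< \deg_{x_j}(u)$ and $x_j(v/x_i) \in I$.
   Context: For a monomial $u$, $\deg_{x_i}(u)$ is the exponent of $x_i$ in $u$. $G(I)$ denotes the minimal set of monomial generators of a monomial ideal $I$. A monomial ideal $I$ generated in a single degree is polymatroidal if for all $u,v\in G(I)$ and all $i$ with $\deg_{x_i}(u)>\deg_{x_i}(v)$ there exists $j$ with $\deg_{x_j}(u)<\deg_{x_j}(v)$ and $x_j(u/x_i)\in I$. For a monomial ideal $I$, its $j$-th graded component $I_{\langle j\rangle}$ is the ideal generated by all monomials of degree $j$ in $I$. $I$ is componentwise polymatroidal if $I_{\langle j\rangle}$ is polymatroidal for every $j$ (for which it is nonzero). *)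

(* Monomials of S = K[x_1..x_n] are identified with their
   exponent vectors; a monomial ideal is identified with its set of monomials,
   i.e. a set of exponent vectors closed under multiplication by monomials. *)
From mathcomp Require Import all_boot.
Set Implicit Arguments. Unset Strict Implicit. Unset Printing Implicit Defensive.

(* the monomial x^a, with a : exponent vector; deg_{x_i}(u) = u i *)
Definition monom (n : nat) := {ffun 'I_n -> nat}.

Definition mdeg n (u : monom n) : nat := \sum_(i < n) u i.

Definition mdvd n (u v : monom n) : Prop := forall i, u i <= v i.

(* x_j * (u / x_i)  (used only when deg_{x_i}(u) > 0) *)
Definition mexch n (u : monom n) (i j : 'I_n) : monom n :=
  [ffun k => u k - (k == i) + (k == j)].

Definition monomial_ideal n (I : monom n -> Prop) : Prop :=
  forall u v, I u -> mdvd u v -> I v.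

Definition mingens n (I : monom n -> Prop) (u : monom n) : Prop :=
  I u /\ forall v, I v -> mdvd v u -> v = u.

Definition single_degree n (I : monom n -> Prop) : Prop :=
  exists d, forall u, mingens I u -> mdeg u = d.

Definition polymatroidal n (I : monom n -> Prop) : Prop :=
  single_degree I /\
  forall u v, mingens I u -> mingens I v ->
  forall i, v i < u i ->
  exists j, u j < v j /\ I (mexch u i j).

Definition component n (I : monom n -> Prop) (d : nat) (w : monom n) : Prop :=
  exists u, I u /\ mdeg u = d /\ mdvd u w.

Definition componentwise_polymatroidal n (I : monom n -> Prop) : Prop :=
  forall d, (exists w, component I d w) -> polymatroidal (component I d).

From mathcomp Require Import all_boot.
From mathcomp Require Import zify.
Set Implicit Arguments. Unset Strict Implicit. Unset Printing Implicit Defensive.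

(* The minimal
   generators of the component I_<d> are exactly the monomials of I of degree d,
   so polymatroidality of I_<d> is the exchange property (2) restricted to pairs
   of monomials of I of the same degree d.
   (2) => (1): equal degree is a special case of (2).
   (1) => (2): given u, v with deg u <= deg v, u not dividing v and u_i < v_i,
   the monomial lcm(u, v) / x_i is divisible by u and has degree >= deg v; by
   interpolation it has a divisor u' of I of degree deg v with u | u'.  The
   exchange property of I_<deg v> applied to v, u' gives j with v_j < u'_j,
   hence v_j < u_j, and x_j (v / x_i) in I. *)

(* u / x_i (truncated at 0), x_j u, and lcm(u, v). *)
Definition mdec n (u : monom n) (i : 'I_n) : monom n := [ffun k => u k - (k == i)].
Definition minc n (u : monom n) (j : 'I_n) : monom n := [ffun k => u k + (k == j)].
Definition mlcm n (u v : monom n) : monom n := [ffun k => maxn (u k) (v k)].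

Lemma mexchE n (u : monom n) i j : mexch u i j = minc (mdec u i) j.
Proof. by apply/ffunP => k; rewrite !ffunE. Qed.

Lemma mdeg_minc n (u : monom n) j : mdeg (minc u j) = (mdeg u).+1.
Proof.
rewrite /mdeg (bigD1 j) //= [in RHS](bigD1 j) //= ffunE eqxx addn1 addSn.
congr (_ + _).+1; apply: eq_bigr => k /negbTE kj.
by rewrite ffunE kj addn0.
Qed.

Lemma mdeg_mdec n (u : monom n) i : 0 < u i -> (mdeg (mdec u i)).+1 = mdeg u.
Proof.
move=> ui_gt0; rewrite /mdeg (bigD1 i) //= [in RHS](bigD1 i) //= ffunE eqxx.
rewrite -addSn subn1 prednK //; congr (_ + _); apply: eq_bigr => k /negbTE ki.
by rewrite ffunE ki subn0.
Qed.

Lemma mdeg_mexch n (u : monom n) i j : 0 < u i -> mdeg (mexch u i j) = mdeg u.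
Proof. by move=> ui_gt0; rewrite mexchE mdeg_minc mdeg_mdec. Qed.

Lemma mdvd_trans n (a b c : monom n) : mdvd a b -> mdvd b c -> mdvd a c.
Proof. by move=> ab bc k; apply: leq_trans (ab k) (bc k). Qed.

Lemma mdvd_le n (a b : monom n) : mdvd a b -> mdeg a <= mdeg b.
Proof. by move=> ab; apply: leq_sum => k _; apply: ab. Qed.

Lemma mdvd_lt n (a b : monom n) k : mdvd a b -> a k < b k -> mdeg a < mdeg b.
Proof.
move=> ab abk; rewrite /mdeg (bigD1 k) //= [X in _ < X](bigD1 k) //=.
by rewrite -addSn leq_add // leq_sum // => l _; apply: ab.
Qed.

Lemma mdvd_eq n (a b : monom n) : mdvd a b -> mdeg b <= mdeg a -> a = b.
Proof.
move=> ab ba; apply/ffunP => k; apply/eqP; rewrite eqn_leq ab leqNgt /=.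
by apply/negP => /(mdvd_lt ab); rewrite ltnNge ba.
Qed.

Lemma not_mdvd n (a b : monom n) : ~ mdvd a b -> exists k, b k < a k.
Proof.
move=> nab; case: (boolP [exists k, b k < a k]) => [/existsP//|/existsPn ge].
by case: nab => k; rewrite leqNgt ge.
Qed.

Lemma mdvd_interpolate n (a b : monom n) d :
  mdvd a b -> mdeg a <= d <= mdeg b ->
  exists c : monom n, [/\ mdvd a c, mdvd c b & mdeg c = d].
Proof.
move=> ab /andP[ad db]; rewrite -(subnKC ad) in db *.
elim: (d - mdeg a) db => [|m IH] db.
  by exists a; split=> //; rewrite addn0.
have [c [ac cb dc]] : exists c, [/\ mdvd a c, mdvd c b & mdeg c = mdeg a + m].
  by apply: IH; lia.
have [l cbl] : exists l, c l < b l.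
  apply: not_mdvd => bc; have := mdvd_le bc; rewrite dc; lia.
exists (minc c l); split; last by rewrite mdeg_minc dc addnS.
- by apply: mdvd_trans ac _ => k; rewrite ffunE leq_addr.
- by move=> k; rewrite ffunE; case: eqP => [->|_]; rewrite ?addn1 ?addn0.
Qed.

Section Components.
Variables (n : nat) (I : monom n -> Prop).

Lemma mingens_component w :
  I w -> mingens (component I (mdeg w)) w.
Proof.
move=> Iw; split; first by exists w; split=> //; split=> // k.
move=> v [x [_ [dx xv]]] vw.
have xw := mdvd_trans xv vw.
rewrite -(mdvd_eq xw (eq_leq (esym dx))) in vw *.
by apply/ffunP => k; apply/eqP; rewrite eqn_leq vw xv.
Qed.

Lemma component_mingens d x :
  mingens (component I d) x -> I x /\ mdeg x = d.
Proof.
move=> [[u [Iu [du ux]]] xmin].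
have ux_eq : u = x by apply: xmin => //; exists u; split=> //; split=> // k.
by rewrite -ux_eq.
Qed.

Lemma component_polymatroidal d :
  (forall u v, I u -> I v -> mdeg u = d -> mdeg v = d ->
   forall i, v i < u i -> exists j, u j < v j /\ I (mexch u i j)) ->
  polymatroidal (component I d).
Proof.
move=> exch; split; first by exists d => x /component_mingens[].
move=> u v /component_mingens[Iu du] /component_mingens[Iv dv] i vui.
have [j [uvj Iuij]] := exch u v Iu Iv du dv i vui.
exists j; split=> //; exists (mexch u i j); split=> //; split; last by move=> k.
by rewrite mdeg_mexch // (leq_ltn_trans (leq0n _) vui).
Qed.

Hypothesis hI : monomial_ideal I.

Lemma component_exchange u v :
  polymatroidal (component I (mdeg u)) -> I u -> I v -> mdeg v = mdeg u ->
  forall i, v i < u i -> exists j, u j < v j /\ I (mexch u i j).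
Proof.
move=> [_ exch] Iu Iv dv i vui.
have mv : mingens (component I (mdeg u)) v by rewrite -dv; apply: mingens_component.
have [j [uvj [x [Ix [_ xu]]]]] := exch u v (mingens_component Iu) mv i vui.
by exists j; split=> //; apply: hI xu.
Qed.

(* The core of (1) => (2): reduce to the same-degree exchange via lcm(u,v)/x_i. *)
Lemma exchange_from_components u v :
  polymatroidal (component I (mdeg v)) ->
  I u -> I v -> mdeg u <= mdeg v -> ~ mdvd u v ->
  forall i, u i < v i -> exists j, v j < u j /\ I (mexch v i j).
Proof.
move=> pv Iu Iv duv nuv i uvi.
set b := mdec (mlcm u v) i.
have lcm_i : mlcm u v i = v i by rewrite ffunE; apply/maxn_idPr/ltnW.
have ub : mdvd u b.
  move=> k; rewrite !ffunE; case: eqP => [->|_]; last by rewrite subn0 leq_maxl.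
  by rewrite (maxn_idPr (ltnW uvi)) subn1 -ltnS prednK // (leq_ltn_trans _ uvi).
have db : mdeg v <= mdeg b.
  have [k vuk] := not_mdvd nuv.
  have vl : mdvd v (mlcm u v) by move=> l; rewrite ffunE leq_maxr.
  have vu_lcm : v k < mlcm u v k by rewrite ffunE (leq_trans vuk (leq_maxl _ _)).
  rewrite -ltnS /b mdeg_mdec ?lcm_i ?(leq_ltn_trans (leq0n _) uvi) //.
  exact: mdvd_lt vl vu_lcm.
have deg_between : mdeg u <= mdeg v <= mdeg b by rewrite duv db.
have [u' [uu' u'b du']] := mdvd_interpolate ub deg_between.
have u'i : u' i < v i by have := u'b i; rewrite ffunE lcm_i eqxx; lia.
have [j [vu'j Ivij]] := component_exchange pv Iv (hI Iu uu') du' u'i.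
exists j; split=> //.
have [ji|ji] := eqVneq j i; first by move: vu'j; rewrite ji ltnNge (ltnW u'i).
have := leq_trans vu'j (u'b j); rewrite !ffunE (negbTE ji) subn0.
by rewrite leq_max ltnn orbF.
Qed.

End Components.

Theorem proposition1p2 (n : nat) (I : monom n -> Prop) :
  monomial_ideal I ->
  (componentwise_polymatroidal I <->
   (forall u v : monom n, I u -> I v -> mdeg u <= mdeg v -> ~ mdvd u v ->
    forall i : 'I_n, u i < v i ->
    exists j : 'I_n, v j < u j /\ I (mexch v i j))).
Proof.
move=> hI; split.
- move=> cp u v Iu Iv duv nuv.
  apply: exchange_from_components => //; apply: cp.
  by exists v, v; split=> //; split=> // k.
- move=> exch d _; apply: component_polymatroidal => u v Iu Iv du dv i vui.
  apply: exch => // [|vu]; first by rewrite du dv.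
  by move: vui; rewrite (mdvd_eq vu) ?ltnn // du dv.
Qed.
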